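(* Let $\kappa$ be a regular cardinal, $\omega\le\lambda\le\kappa$, $\tau$ a signature with $|\mathrm{fnc}(\tau)|<\kappa$, and $1\le\nu<\lambda$ a cardinal. Then $\mathcal L_{\kappa,\lambda}(\tau)$ is closed under $\vartheta_{\le\nu}$ and under $\vartheta_\nu$: for every sentence $\varphi$ of $\mathcal L_{\kappa,\lambda}(\tau)$, both $\vartheta_{\le\nu}(\varphi)$ and $\vartheta_\nu(\varphi)$ are expressible by sentences of $\mathcal L_{\kappa,\lambda}(\tau)$.
   Context: $\mathrm{fnc}(\tau)$ is the set of function symbols of $\tau$ (constants counted as $0$-ary function symbols). Models are nonempty; a submodel is a substructure (nonempty subset closed under the interpretations of the symbols in $\mathrm{fnc}(\tau)$). $\mathcal L_{\kappa,\lambda}(\tau)$ is the infinitary first-order language with equality allowing negation, conjunctions/disjunctions of fewer than $\kappa$ formulas, and quantification over blocks of fewer than $\lambda$ variables. $\mathfrak A\vDash\vartheta_{\nu}(\varphi)$ (resp. $\vartheta_{\le\nu}(\varphi)$) iff $\mathfrak A$ has a submodel of cardinality exactly $\nu$ (resp. $\le\nu$) satisfying $\varphi$. A property is expressible by a sentence $\chi$ if for every $\tau$-model $\mathfrak A$, $\mathfrak A$ has the property iff $\mathfrak A\vDash\chi$. *)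

From mathcomp Require Import ssreflect ssrfun ssrbool eqtype ssrnat fintype.
Set Implicit Arguments.
Unset Strict Implicit.

(** * Cardinal comparisons between types (a cardinal is represented by a type) *)
Definition le_card (A B : Type) : Prop := exists f : A -> B, injective f.
Definition lt_card (A B : Type) : Prop := le_card A B /\ ~ le_card B A.
Definition eq_card (A B : Type) : Prop := exists f : A -> B, bijective f.

Definition regular_card (K : Type) : Prop :=
  le_card nat K /\
  forall (I : Type) (F : I -> Type),
    lt_card I K -> (forall i, lt_card (F i) K) -> lt_card {i : I & F i} K.

(** * Signatures (finitary function and relation symbols; constants are
      0-ary function symbols) *)
Record signature := Signature {
  fsym : Type;
  farity : fsym -> nat;
  rsym : Type;
  rarity : rsym -> nat }.

Section Syntax.
Variable tau : signature.

Inductive term (X : Type) : Type :=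
| TVar : X -> term X
| TApp : forall f : fsym tau, ('I_(farity f) -> term X) -> term X.

(** infinitary formulas with free variables in [X] (de Bruijn-style contexts):
    a block quantifier binds a block of variables indexed by [B]. *)
Inductive form : Type -> Type :=
| FEq   : forall X, term X -> term X -> form X
| FRel  : forall X (r : rsym tau), ('I_(rarity r) -> term X) -> form X
| FNeg  : forall X, form X -> form X
| FConj : forall X (I : Type), (I -> form X) -> form X
| FDisj : forall X (I : Type), (I -> form X) -> form X
| FEx   : forall X (B : Type), form (X + B)%type -> form X
| FAll  : forall X (B : Type), form (X + B)%type -> form X.

Inductive inL (K L : Type) : forall X, form X -> Prop :=
| inL_eq   : forall X t1 t2, inL K L (@FEq X t1 t2)
| inL_rel  : forall X r ts, inL K L (@FRel X r ts)
| inL_neg  : forall X p, inL K L p -> inL K L (@FNeg X p)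
| inL_conj : forall X I ps, lt_card I K -> (forall i, inL K L (ps i)) ->
               inL K L (@FConj X I ps)
| inL_disj : forall X I ps, lt_card I K -> (forall i, inL K L (ps i)) ->
               inL K L (@FDisj X I ps)
| inL_ex   : forall X B p, lt_card B L -> inL K L p -> inL K L (@FEx X B p)
| inL_all  : forall X B p, lt_card B L -> inL K L p -> inL K L (@FAll X B p).

Definition sentence := form Empty_set.

Record model := Model {
  carrier : Type;
  carrier_ne : inhabited carrier;
  fint : forall f : fsym tau, ('I_(farity f) -> carrier) -> carrier;
  rint : forall r : rsym tau, ('I_(rarity r) -> carrier) -> Prop }.

Fixpoint eval_term (M : model) X (e : X -> carrier M) (t : term X) : carrier M :=
  match t with
  | TVar x => e x
  | TApp f ts => @fint M f (fun i => eval_term e (ts i))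
  end.

Definition extend (A X B : Type) (e : X -> A) (a : B -> A) (z : X + B) : A :=
  match z with inl x => e x | inr b => a b end.

Fixpoint sat (M : model) X (phi : form X) : (X -> carrier M) -> Prop :=
  match phi in form Y return (Y -> carrier M) -> Prop with
  | FEq _ t1 t2 => fun e => eval_term e t1 = eval_term e t2
  | FRel _ r ts => fun e => @rint M r (fun i => eval_term e (ts i))
  | FNeg _ p => fun e => ~ sat p e
  | FConj _ _ ps => fun e => forall i, sat (ps i) e
  | FDisj _ _ ps => fun e => exists i, sat (ps i) e
  | FEx _ B p => fun e => exists a : B -> carrier M, sat p (extend e a)
  | FAll _ B p => fun e => forall a : B -> carrier M, sat p (extend e a)
  end.

Definition models (M : model) (phi : sentence) : Prop :=
  @sat M Empty_set phi (fun z : Empty_set => match z return carrier M with end).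

Definition fclosed (M : model) (S : carrier M -> Prop) : Prop :=
  forall (f : fsym tau) (args : 'I_(farity f) -> carrier M),
    (forall i, S (args i)) -> S (@fint M f args).

Definition submodel (M : model) (S : carrier M -> Prop)
  (a0 : {a : carrier M | S a}) (hS : fclosed S) : model :=
  @Model {a : carrier M | S a} (inhabits a0)
    (fun f args => exist S (@fint M f (fun i => proj1_sig (args i)))
                      (hS f _ (fun i => proj2_sig (args i))))
    (fun r args => @rint M r (fun i => proj1_sig (args i))).

Definition theta_eq (N : Type) (phi : sentence) (M : model) : Prop :=
  exists (S : carrier M -> Prop) (a0 : {a : carrier M | S a}) (hS : fclosed S),
    eq_card {a : carrier M | S a} N /\ models (submodel a0 hS) phi.

Definition theta_le (N : Type) (phi : sentence) (M : model) : Prop :=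
  exists (S : carrier M -> Prop) (a0 : {a : carrier M | S a}) (hS : fclosed S),
    le_card {a : carrier M | S a} N /\ models (submodel a0 hS) phi.

Definition expressible_in (K L : Type) (P : model -> Prop) : Prop :=
  exists chi : sentence, inL K L chi /\ forall M : model, P M <-> models M chi.

End Syntax.

From mathcomp Require Import ssreflect ssrfun ssrbool eqtype ssrnat fintype.
(* Imported after fintype, so that [eq_card] is the cardinal equality of Defs. *)
From Pilot Require Import Defs.
From Stdlib Require Import Classical ClassicalEpsilon FunctionalExtensionality ProofIrrelevance.
Set Implicit Arguments.
Unset Strict Implicit.

(* A submodel of size at most [N] is the range of a map [x : N -> M] that is
   closed under the function symbols.  Hence theta_{<= nu}(phi) is expressed by
   an existential quantifier over a block of [N] variables, followed by the
   closure condition and by phi with every quantifier relativized to the values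
   of these variables; theta_nu(phi) adds that the variables are pairwise
   distinct.  The closure condition quantifies over all [farity f]-tuples of
   [N], which is written as [farity f] nested conjunctions of size [N]. *)

Lemma le_card_trans A B C : le_card A B -> le_card B C -> le_card A C.
Proof. by move=> [f inj_f] [g inj_g]; exists (g \o f) => a b /inj_g /inj_f. Qed.

Lemma lt_le_card_trans A B C : lt_card A B -> le_card B C -> lt_card A C.
Proof.
move=> [leAB not_leBA] leBC; split; first exact: le_card_trans leAB leBC.
by move=> leCA; apply: not_leBA; apply: le_card_trans leBC leCA.
Qed.

Lemma le_lt_card_trans A B C : le_card A B -> lt_card B C -> lt_card A C.
Proof.
move=> leAB [leBC not_leCB]; split; first exact: le_card_trans leAB leBC.
by move=> leCA; apply: not_leCB; apply: le_card_trans leCA leAB.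
Qed.

Lemma val_inj_sig A (P : A -> Prop) : injective (@proj1_sig A P).
Proof. exact: eq_sig_hprop (fun a => @proof_irrelevance (P a)). Qed.

Lemma lt_card_sig A (P : A -> Prop) K : lt_card A K -> lt_card {a | P a} K.
Proof. by apply: le_lt_card_trans; exists (@proj1_sig A P); apply: val_inj_sig. Qed.

Lemma lt_card_bool K : le_card nat K -> lt_card bool K.
Proof.
move=> le_nat_K; split.
  by apply: le_card_trans le_nat_K; exists nat_of_bool => [[] []].
move=> leKB; have [g inj_g] := le_card_trans le_nat_K leKB.
have g01 : g 0 <> g 1 by move=> /inj_g.
have g02 : g 0 <> g 2 by move=> /inj_g.
have g12 : g 1 <> g 2 by move=> /inj_g.
by move: g01 g02 g12; case: (g 0); case: (g 1); case: (g 2).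
Qed.

Definition range A N (x : N -> A) (a : A) : Prop := exists n, x n = a.

Lemma le_card_sig_range A (S : A -> Prop) N :
  (exists a, S a) ->
  le_card {a | S a} N <-> exists x : N -> A, forall a, S a <-> range x a.
Proof.
move=> [a0 Sa0]; split.
- move=> [g inj_g].
  pose pre n := epsilon (inhabits (exist S a0 Sa0)) (fun u => g u = n).
  exists (fun n => proj1_sig (pre n)) => a; split=> [Sa|[n <-]]; last exact: proj2_sig.
  exists (g (exist S a Sa)).
  by have /inj_g -> : g (pre (g (exist S a Sa))) = g (exist S a Sa)
    by apply: (epsilon_spec _ (fun u => g u = _)); exists (exist S a Sa).
- move=> [x S_range].
  have [g x_g] := choice (fun (u : {a | S a}) n => x n = proj1_sig u)
                         (fun u => proj1 (S_range _) (proj2_sig u)).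
  by exists g => u v /(congr1 x); rewrite !x_g => /val_inj_sig.
Qed.

Lemma eq_card_sig_range A (S : A -> Prop) N :
  eq_card {a | S a} N <-> exists x : N -> A, injective x /\ forall a, S a <-> range x a.
Proof.
split.
- move=> [g [h gK hK]]; exists (fun n => proj1_sig (h n)); split.
    by move=> n m /val_inj_sig /(congr1 g); rewrite !hK.
  move=> a; split=> [Sa|[n <-]]; last exact: proj2_sig.
  by exists (g (exist S a Sa)); rewrite gK.
- move=> [x [inj_x S_range]].
  have [g x_g] := choice (fun (u : {a | S a}) n => x n = proj1_sig u)
                         (fun u => proj1 (S_range _) (proj2_sig u)).
  have Sx n : S (x n) by apply/S_range; exists n.
  exists g, (fun n => exist S (x n) (Sx n)).
    by move=> u; apply: val_inj_sig; rewrite /= x_g.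
  by move=> n; apply: inj_x; rewrite x_g.
Qed.

Definition emp_fun A (z : Empty_set) : A := match z with end.

Lemma ord0_false (i : 'I_0) : False. Proof. by case: i. Qed.

Definition tuple_nil A : 'I_0 -> A := fun i => False_rect A (ord0_false i).

Definition tuple_cons A k (a : A) (v : 'I_k -> A) : 'I_k.+1 -> A :=
  fun i => if unlift ord0 i is Some j then v j else a.

Lemma tuple_nil_eq A (v : 'I_0 -> A) : v = tuple_nil A.
Proof. by apply: functional_extensionality => i; case: (ord0_false i). Qed.

Lemma tuple_cons_eta A k (v : 'I_k.+1 -> A) :
  v = tuple_cons (v ord0) (fun j => v (lift ord0 j)).
Proof.
by apply: functional_extensionality => i; rewrite /tuple_cons; case: unliftP => [j|] ->.
Qed.

Section Relativization.

Variables (tau : signature) (N : Type).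

Fixpoint rename_term X Y (s : X -> Y) (t : term tau X) : term tau Y :=
  match t with
  | TVar x => TVar tau (s x)
  | TApp f ts => TApp (fun i => rename_term s (ts i))
  end.

Definition lift_renaming X Y B (s : X -> Y) (z : X + B) : Y + B :=
  match z with inl x => inl (s x) | inr b => inr b end.

Definition conj2 Y (p q : form tau Y) : form tau Y :=
  FConj (fun b : bool => if b then p else q).

Definition disj2 Y (p q : form tau Y) : form tau Y :=
  FDisj (fun b : bool => if b then p else q).

Definition in_range Y B (xv : N -> Y) : form tau (Y + B) :=
  FConj (fun b : B => FDisj (fun n : N => FEq (TVar tau (inr b)) (TVar tau (inl (xv n))))).

Fixpoint relativize X (p : form tau X) : forall Y, (X -> Y) -> (N -> Y) -> form tau Y :=
  match p in form _ X0 return forall Y, (X0 -> Y) -> (N -> Y) -> form tau Y with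
  | FEq _ t1 t2 => fun Y s xv => FEq (rename_term s t1) (rename_term s t2)
  | FRel _ r ts => fun Y s xv => @FRel tau Y r (fun i => rename_term s (ts i))
  | FNeg _ q => fun Y s xv => FNeg (relativize q s xv)
  | FConj _ _ ps => fun Y s xv => FConj (fun i => relativize (ps i) s xv)
  | FDisj _ _ ps => fun Y s xv => FDisj (fun i => relativize (ps i) s xv)
  | FEx _ B q => fun Y s xv =>
      FEx (conj2 (@in_range Y B xv)
                 (relativize q (@lift_renaming _ _ B s) (fun n => inl (xv n))))
  | FAll _ B q => fun Y s xv =>
      FAll (disj2 (FNeg (@in_range Y B xv))
                  (relativize q (@lift_renaming _ _ B s) (fun n => inl (xv n))))
  end.

Fixpoint tuple_conj Y k : (('I_k -> N) -> form tau Y) -> form tau Y :=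
  match k with
  | 0 => fun P => P (tuple_nil N)
  | k'.+1 => fun P => FConj (fun n : N => tuple_conj (fun v => P (tuple_cons n v)))
  end.

Definition closed_range Y (xv : N -> Y) : form tau Y :=
  FConj (fun f : fsym tau => tuple_conj (fun v : 'I_(farity f) -> N =>
    FDisj (fun m : N => FEq (TApp (fun i => TVar tau (xv (v i)))) (TVar tau (xv m))))).

Definition injective_vars Y (xv : N -> Y) : form tau Y :=
  FConj (fun n : N => FConj (fun m : {m : N | n <> m} =>
    FNeg (FEq (TVar tau (xv n)) (TVar tau (xv (proj1_sig m)))))).

Section Size.

Variables (K L : Type).
Hypotheses (ltBK : lt_card bool K) (ltNK : lt_card N K) (leLK : le_card L K).

Lemma inL_conj2 Y (p q : form tau Y) : inL K L p -> inL K L q -> inL K L (conj2 p q).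
Proof. by move=> Lp Lq; constructor=> // -[]. Qed.

Lemma inL_disj2 Y (p q : form tau Y) : inL K L p -> inL K L q -> inL K L (disj2 p q).
Proof. by move=> Lp Lq; constructor=> // -[]. Qed.

Lemma inL_in_range Y B (xv : N -> Y) : lt_card B L -> inL K L (@in_range Y B xv).
Proof.
move=> ltBL; constructor; first exact: lt_le_card_trans ltBL leLK.
by move=> b; constructor=> // n; constructor.
Qed.

Lemma inL_relativize X (p : form tau X) :
  inL K L p -> forall Y (s : X -> Y) (xv : N -> Y), inL K L (relativize p s xv).
Proof.
elim=> {X p} [X t1 t2|X r ts|X p _ IH|X I ps ltIK _ IH|X I ps ltIK _ IH|X B p ltBL _ IH
  |X B p ltBL _ IH] Y s xv /=; constructor=> //.
- by apply: inL_conj2; [apply: inL_in_range | apply: IH].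
- by apply: inL_disj2; [constructor; apply: inL_in_range | apply: IH].
Qed.

Lemma inL_tuple_conj Y k (P : ('I_k -> N) -> form tau Y) :
  (forall v, inL K L (P v)) -> inL K L (tuple_conj P).
Proof.
elim: k P => [|k IH] P LP /=; first exact: LP.
by constructor=> // n; apply: IH.
Qed.

Lemma inL_closed_range Y (xv : N -> Y) : lt_card (fsym tau) K -> inL K L (closed_range xv).
Proof.
move=> ltFK; constructor=> // f; apply: inL_tuple_conj => v.
by constructor=> // m; constructor.
Qed.

Lemma inL_injective_vars Y (xv : N -> Y) : inL K L (injective_vars xv).
Proof.
constructor=> // n; constructor; first exact: lt_card_sig.
by move=> m; do 2 constructor.
Qed.

End Size.

Section Semantics.

Variable M : model tau.

Lemma sat_conj2 Y (p q : form tau Y) (e : Y -> carrier M) :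
  sat (conj2 p q) e <-> sat p e /\ sat q e.
Proof. by split=> [h|[hp hq] []]; [split; [apply: (h true) | apply: (h false)] | |]. Qed.

Lemma sat_disj2 Y (p q : form tau Y) (e : Y -> carrier M) :
  sat (disj2 p q) e <-> sat p e \/ sat q e.
Proof. by split=> [[[] h]|[h|h]]; [left | right | exists true | exists false]. Qed.

Lemma sat_tuple_conj Y k (P : ('I_k -> N) -> form tau Y) (e : Y -> carrier M) :
  sat (tuple_conj P) e <-> forall v, sat (P v) e.
Proof.
elim: k P => [|k IH] P /=.
  by split=> [h v|]; [rewrite (tuple_nil_eq v) | apply].
split=> [h v|h n]; last by apply/IH => v; apply: h.
by rewrite (tuple_cons_eta v); apply: (proj1 (IH _) (h (v ord0))).
Qed.

Lemma sat_closed_range Y (xv : N -> Y) (e : Y -> carrier M) :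
  sat (closed_range xv) e <-> fclosed (range (e \o xv)).
Proof.
split=> [h f args args_range|closed f].
  have [v e_v] := choice _ args_range.
  have [m e_m] := proj1 (sat_tuple_conj _ _) (h f) v.
  exists m; move: e_m => /= <-; congr (fint _).
  by apply: functional_extensionality => i; apply: e_v.
apply/sat_tuple_conj => v.
have [m e_m] := closed f (fun i => e (xv (v i))) (fun i => ex_intro _ (v i) erefl).
by exists m.
Qed.

Lemma sat_injective_vars Y (xv : N -> Y) (e : Y -> carrier M) :
  sat (injective_vars xv) e <-> injective (e \o xv).
Proof.
split=> [h n m e_nm|inj n [m neq_nm] /= e_nm]; last exact/neq_nm/inj.
by apply: NNPP => neq_nm; apply: (h n (exist _ m neq_nm)).
Qed.

Variables (x : N -> carrier M) (S : carrier M -> Prop).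
Hypothesis S_range : forall a, S a <-> range x a.
Variables (a0 : {a | S a}) (S_closed : fclosed S).

Let MS := submodel a0 S_closed.

Lemma eval_rename_term X Y (s : X -> Y) (e : Y -> carrier M) (ee : X -> carrier MS) :
  (forall z, proj1_sig (ee z) = e (s z)) ->
  forall t, proj1_sig (eval_term ee t) = eval_term e (rename_term s t).
Proof.
move=> ee_e; elim=> [z|f ts IH] //=.
by congr (fint _); apply: functional_extensionality => i; apply: IH.
Qed.

Lemma sat_in_range Y B (xv : N -> Y) (e : Y -> carrier M) (a : B -> carrier M) :
  (forall n, e (xv n) = x n) ->
  sat (@in_range Y B xv) (extend e a) <-> forall b, S (a b).
Proof.
move=> e_xv; split=> Sa b; have := Sa b.
  by move=> [n /= ->]; apply/S_range; exists n; rewrite e_xv.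
by move=> /S_range [n xn]; exists n; rewrite /= e_xv.
Qed.

Lemma sat_relativize X (p : form tau X) :
  forall Y (s : X -> Y) (xv : N -> Y) (e : Y -> carrier M) (ee : X -> carrier MS),
  (forall n, e (xv n) = x n) -> (forall z, proj1_sig (ee z) = e (s z)) ->
  sat (relativize p s xv) e <-> sat p ee.
Proof.
elim: p => {X} /= [X t1 t2|X r ts|X q IH|X I ps IH|X I ps IH|X B q IH|X B q IH]
  Y s xv e ee e_xv ee_e.
- by rewrite -!(eval_rename_term ee_e); split=> [/val_inj_sig|->].
- suff -> : (fun i => eval_term e (rename_term s (ts i))) =
            (fun i => proj1_sig (eval_term (M:=MS) ee (ts i))) by [].
  by apply: functional_extensionality => i; rewrite (eval_rename_term ee_e).
- by rewrite (IH _ s xv e ee).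
- by split=> h i; apply/(IH i _ s xv e ee).
- by split=> -[i h]; exists i; apply/(IH i _ s xv e ee).
- have IHB u := IH _ (@lift_renaming _ _ B s) (fun n => inl (xv n))
    (extend e (fun b => proj1_sig (u b))) (extend ee u) e_xv ltac:(by case).
  split=> [[a /sat_conj2 [/(sat_in_range _ e_xv) Sa qa]]|[u qu]].
    by exists (fun b => exist S (a b) (Sa b)); apply/IHB.
  exists (fun b => proj1_sig (u b)); apply/sat_conj2; split; last exact/IHB.
  by apply/(sat_in_range _ e_xv) => b; apply: proj2_sig.
- have IHB u := IH _ (@lift_renaming _ _ B s) (fun n => inl (xv n))
    (extend e (fun b => proj1_sig (u b))) (extend ee u) e_xv ltac:(by case).
  split=> [qall u|qall a].
    have /sat_disj2 [/(sat_in_range _ e_xv) []|/IHB //] := qall (fun b => proj1_sig (u b)).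
    by move=> b; apply: proj2_sig.
  apply/sat_disj2; case: (classic (forall b, S (a b))) => [Sa|notSa]; [right|left].
    exact/(IHB (fun b => exist S (a b) (Sa b))).
  by move/(sat_in_range _ e_xv).
Qed.

Lemma models_submodel_range (phi : sentence tau) :
  models MS phi <-> sat (relativize phi inl inr) (extend (@emp_fun _) x).
Proof. by symmetry; apply: (@sat_relativize _ phi _ inl inr) => // -[]. Qed.

End Semantics.

End Relativization.

Section Theta.

Variables (tau : signature) (N : Type) (phi : sentence tau).

Definition submodel_formula : form tau (Empty_set + N) :=
  conj2 (closed_range tau (@inr Empty_set N)) (relativize phi inl inr).

Definition theta_le_sentence : sentence tau := FEx submodel_formula.

Definition theta_eq_sentence : sentence tau :=
  FEx (conj2 submodel_formula (injective_vars tau (@inr Empty_set N))).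

Lemma sat_submodel_formula (M : model tau) (x : N -> carrier M) :
  inhabited N ->
  sat submodel_formula (extend (@emp_fun _) x) <->
  exists S (a0 : {a | S a}) (S_closed : fclosed S),
    (forall a, S a <-> range x a) /\ models (submodel a0 S_closed) phi.
Proof.
move=> [n0]; rewrite sat_conj2 sat_closed_range; split.
  move=> [x_closed rel_phi].
  exists (range x), (exist _ (x n0) (ex_intro _ n0 erefl)), x_closed; split=> //.
  exact/(models_submodel_range (fun a => iff_refl (range x a))).
move=> [S [a0 [S_closed [S_range mod]]]]; split.
  by move=> f args args_range; apply/S_range/S_closed => i; apply/S_range.
exact/(models_submodel_range S_range a0 S_closed).
Qed.

Lemma theta_le_sentenceP (M : model tau) :
  inhabited N -> theta_le N phi M <-> models M theta_le_sentence.
Proof.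
move=> inhN; split.
  move=> [S [a0 [S_closed [leSN mod]]]].
  have [x S_range] := proj1 (le_card_sig_range _ (ex_intro _ _ (proj2_sig a0))) leSN.
  by exists x; apply/sat_submodel_formula => //; exists S, a0, S_closed.
move=> [x /(sat_submodel_formula _ inhN) [S [a0 [S_closed [S_range mod]]]]].
exists S, a0, S_closed; split=> //.
by apply/le_card_sig_range; [exists (proj1_sig a0); apply: proj2_sig | exists x].
Qed.

Lemma theta_eq_sentenceP (M : model tau) :
  inhabited N -> theta_eq N phi M <-> models M theta_eq_sentence.
Proof.
move=> inhN; split.
  move=> [S [a0 [S_closed [/eq_card_sig_range [x [x_inj S_range]] mod]]]].
  exists x; apply/sat_conj2; split; last exact/sat_injective_vars.
  by apply/sat_submodel_formula => //; exists S, a0, S_closed.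
move=> [x /sat_conj2 [/(sat_submodel_formula _ inhN) [S [a0 [S_closed [S_range mod]]]]]].
move=> /sat_injective_vars x_inj.
exists S, a0, S_closed; split=> //.
by apply/eq_card_sig_range; exists x.
Qed.

Variables (K L : Type).
Hypotheses (ltBK : lt_card bool K) (leLK : le_card L K) (ltNL : lt_card N L).
Hypotheses (ltFK : lt_card (fsym tau) K) (L_phi : inL K L phi).

Let ltNK : lt_card N K := lt_le_card_trans ltNL leLK.

Lemma inL_submodel_formula : inL K L submodel_formula.
Proof.
apply: inL_conj2 => //; first exact: inL_closed_range.
exact: inL_relativize.
Qed.

Lemma inL_theta_le_sentence : inL K L theta_le_sentence.
Proof. by constructor=> //; apply: inL_submodel_formula. Qed.

Lemma inL_theta_eq_sentence : inL K L theta_eq_sentence.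
Proof.
constructor=> //; apply: inL_conj2 => //; first exact: inL_submodel_formula.
exact: inL_injective_vars.
Qed.

End Theta.

Theorem corollary2 (K L N : Type) (tau : signature) :
  regular_card K ->
  le_card nat L -> le_card L K ->
  lt_card (fsym tau) K ->
  inhabited N -> lt_card N L ->
  forall phi : sentence tau, inL K L phi ->
    expressible_in K L (theta_le N phi) /\ expressible_in K L (theta_eq N phi).
Proof.
move=> _ leNL leLK ltFK inhN ltNL phi L_phi.
have ltBK := lt_card_bool (le_card_trans leNL leLK).
split.
  exists (theta_le_sentence N phi); split; first exact: inL_theta_le_sentence.
  by move=> M; apply: theta_le_sentenceP.
exists (theta_eq_sentence N phi); split; first exact: inL_theta_eq_sentence.
by move=> M; apply: theta_eq_sentenceP.
Qed.
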